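(* Let $y,z$ be nonzero complex numbers and let $u_n=u_n(y,z)$, $v_n=v_n(y,z)$ be the Lucas sequences of the first and second kind. Let $x,r\in\mathbb{C}$ and let $c,n$ be integers with $n\ge c$; if $c<0$ assume moreover $r\neq 0$. Then \[ \sum_{k=c}^n(-1)^k x^{n-k}r^k\big(r v_{k+1}(y,z)+(xy+2rz)u_k(y,z)\big)=(-1)^n y\,r^{n+1}u_{n+1}(y,z)+(-1)^c r^c y\,x^{n-c+1}u_c(y,z) \] and \[ \sum_{k=c}^n(-1)^k x^{n-k}r^k\big((y^2-4z)r\,u_{k+1}(y,z)+(xy+2rz)v_k(y,z)\big)=(-1)^n y\,r^{n+1}v_{n+1}(y,z)+(-1)^c r^c y\,x^{n-c+1}v_c(y,z). \]
   Context: For nonzero complex numbers $y,z$, the Lucas sequences $u_n(y,z)$ and $v_n(y,z)$ are defined by $u_0=0$, $u_1=1$, $v_0=2$, $v_1=y$ and $w_n=y\,w_{n-1}-z\,w_{n-2}$ for $n\ge 2$ (for $w=u$ and $w=v$), and extended to negative indices by $u_{-n}(y,z)=-u_n(y,z)/z^n$ and $v_{-n}(y,z)=v_n(y,z)/z^n$. *)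

From HB Require Import structures.
From mathcomp Require Import all_boot all_order all_algebra.
From mathcomp Require Import complex.
From mathcomp Require Import Rstruct.
Set Implicit Arguments. Unset Strict Implicit. Unset Printing Implicit Defensive.
Import Order.TTheory GRing.Theory Num.Theory.
Local Open Scope ring_scope.

Notation C := (complex Rdefinitions.R).

Fixpoint lucas_pair (y z w0 w1 : C) (n : nat) : C * C :=
  match n with
  | 0%N => (w0, w1)
  | m.+1 => let p := lucas_pair y z w0 w1 m in (p.2, y * p.2 - z * p.1)
  end.

Definition u_nat (y z : C) (n : nat) : C := (lucas_pair y z 0 1 n).1.
Definition v_nat (y z : C) (n : nat) : C := (lucas_pair y z 2 y n).1.

Definition lucas_u (y z : C) (n : int) : C :=
  match n with
  | Posz m => u_nat y z m
  | Negz m => - u_nat y z m.+1 / z ^+ m.+1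
  end.

Definition lucas_v (y z : C) (n : int) : C :=
  match n with
  | Posz m => v_nat y z m
  | Negz m => v_nat y z m.+1 / z ^+ m.+1
  end.

(* Sum over integers k with c <= k <= n (assuming c <= n). *)
Definition isum (c n : int) (F : int -> C) : C :=
  \sum_(0 <= i < (absz (n - c)).+1) F (c + i%:Z).

(* Both sums telescope.  The Lucas identities v_{k+1} = y u_{k+1} - 2 z u_k and
   y v_{k+1} = (y^2 - 4z) u_{k+1} + 2 z v_k turn the k-th summand into
   (-1)^k x^(n-k) r^k (r w_{k+1} + x w_k) with w = y u (resp. w = y v), and that
   is B(k+1) - B(k) for B(k) = -(-1)^k r^k x^(n-k+1) w_k.  Both identities hold
   for all integer indices because each side satisfies the two-sided recurrence
   w_{k+2} = y w_{k+1} - z w_k, whose solutions (for z != 0) are determined by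
   w_0 and w_1. *)
From HB Require Import structures.
From mathcomp Require Import all_boot all_order all_algebra.
From mathcomp Require Import complex Rstruct.
From mathcomp Require Import ring zify.
Set Implicit Arguments. Unset Strict Implicit. Unset Printing Implicit Defensive.
Import Order.TTheory GRing.Theory Num.Theory.
Local Open Scope ring_scope.

Section LucasRecurrence.
Variables (R : idomainType) (y z : R).

Definition lucas_rec (w : int -> R) :=
  forall k, w (k + 2) = y * w (k + 1) - z * w k.

Lemma lucas_rec_shift w j : lucas_rec w -> lucas_rec (fun k => w (k + j)).
Proof. by move=> wP k; rewrite !(addrAC k _ j) wP. Qed.

Lemma lucas_recD w1 w2 :
  lucas_rec w1 -> lucas_rec w2 -> lucas_rec (fun k => w1 k + w2 k).
Proof. by move=> w1P w2P k; rewrite w1P w2P; ring. Qed.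

Lemma lucas_recZ a w : lucas_rec w -> lucas_rec (fun k => a * w k).
Proof. by move=> wP k; rewrite wP; ring. Qed.

Hypothesis z_neq0 : z != 0.

Lemma lucas_rec_eq w1 w2 :
  lucas_rec w1 -> lucas_rec w2 -> w1 0 = w2 0 -> w1 1 = w2 1 -> w1 =1 w2.
Proof.
move=> w1P w2P e0 e1.
have up (m : nat) : w1 m = w2 m /\ w1 (m%:Z + 1) = w2 (m%:Z + 1).
  elim: m => [|m [IHm IHm1]]; first by [].
  have -> : m.+1%:Z + 1 = m%:Z + 2 by lia.
  by rewrite w1P w2P -IHm -IHm1 (_ : m.+1%:Z = m%:Z + 1) //; lia.
have down (m : nat) : w1 (- m%:Z) = w2 (- m%:Z) /\ w1 (- m%:Z + 1) = w2 (- m%:Z + 1).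
  elim: m => [|m [IHm IHm1]]; first by rewrite oppr0 add0r.
  have Em : - m.+1%:Z + 1 = - m%:Z by lia.
  split; last by rewrite Em.
  have := w1P (- m.+1%:Z); have := w2P (- m.+1%:Z).
  rewrite (_ : - m.+1%:Z + 2 = - m%:Z + 1); last by lia.
  by rewrite Em IHm IHm1 => -> /addrI /oppr_inj /(mulfI z_neq0).
by case=> m; [case: (up m) | rewrite NegzE; case: (down m.+1)].
Qed.

End LucasRecurrence.

(* The last two hypotheses are the recurrence at k = -2 and k = -1. *)
Lemma lucas_rec_signed_ext (F : fieldType) (y z s : F) (w : nat -> F) (f : int -> F) :
  z != 0 -> (forall m, w m.+2 = y * w m.+1 - z * w m) ->
  (forall m : nat, f m = w m) -> (forall m, f (Negz m) = s * w m.+1 / z ^+ m.+1) ->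
  s * w 0%N = w 0%N -> w 1%N = y * w 0%N - s * w 1%N -> lucas_rec y z f.
Proof.
move=> z_neq0 wS fP fN s0 s1 [m|[|[|m]]].
- rewrite (_ : m%:Z + 2 = m.+2%:Z); last by lia.
  rewrite (_ : m%:Z + 1 = m.+1%:Z); last by lia.
  by rewrite !fP wS.
- rewrite (_ : Negz 0 + 2 = 1) // (_ : Negz 0 + 1 = 0) //.
  by rewrite (fP 1%N) (fP 0%N) (fN 0%N) [z * _]mulrC divfK.
- rewrite (_ : Negz 1 + 2 = 0) // (_ : Negz 1 + 1 = Negz 0) // (fP 0%N) !fN wS -{1}s0.
  by field.
- rewrite (_ : Negz m.+2 + 2 = Negz m); last by rewrite !NegzE; lia.
  rewrite (_ : Negz m.+2 + 1 = Negz m.+1); last by rewrite !NegzE; lia.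
  have zm : z ^+ m != 0 by rewrite expf_eq0 negb_and z_neq0 orbT.
  by rewrite !fN (wS m.+1) !exprS; field; rewrite z_neq0 zm.
Qed.

Lemma lucas_pair_rec (y z w0 w1 : C) m :
  (lucas_pair y z w0 w1 m.+2).1 =
    y * (lucas_pair y z w0 w1 m.+1).1 - z * (lucas_pair y z w0 w1 m).1.
Proof. by []. Qed.

Section LucasSequences.
Variables (y z : C).
Hypothesis z_neq0 : z != 0.
Local Notation u := (lucas_u y z).
Local Notation v := (lucas_v y z).

Lemma lucas_u_rec : lucas_rec y z u.
Proof.
apply: (@lucas_rec_signed_ext _ _ _ (-1) (u_nat y z)) => //; try exact: lucas_pair_rec.
- by move=> m; rewrite /= mulN1r.
- by rewrite /u_nat /=; ring.
- by rewrite /u_nat /=; ring.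
Qed.

Lemma lucas_v_rec : lucas_rec y z v.
Proof.
apply: (@lucas_rec_signed_ext _ _ _ 1 (v_nat y z)) => //; try exact: lucas_pair_rec.
- by move=> m; rewrite /= mul1r.
- by rewrite mul1r.
- by rewrite /v_nat /=; ring.
Qed.

Lemma lucas_vS_u k : v (k + 1) = y * u (k + 1) - 2 * z * u k.
Proof.
rewrite -mulNr.
apply: (lucas_rec_eq z_neq0 (lucas_rec_shift 1 lucas_v_rec)
  (lucas_recD (lucas_recZ y (lucas_rec_shift 1 lucas_u_rec)) (lucas_recZ _ lucas_u_rec)));
  by rewrite /lucas_u /lucas_v /u_nat /v_nat /=; ring.
Qed.

Lemma lucas_yvS k : y * v (k + 1) = (y ^+ 2 - 4 * z) * u (k + 1) + 2 * z * v k.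
Proof.
apply: (lucas_rec_eq z_neq0 (lucas_recZ y (lucas_rec_shift 1 lucas_v_rec))
  (lucas_recD (lucas_recZ _ (lucas_rec_shift 1 lucas_u_rec)) (lucas_recZ _ lucas_v_rec)));
  by rewrite /lucas_u /lucas_v /u_nat /v_nat /=; ring.
Qed.

End LucasSequences.

Lemma eq_isum c n (F G : int -> C) : F =1 G -> isum c n F = isum c n G.
Proof. by move=> FG; apply: eq_bigr => i _; apply: FG. Qed.

Lemma isum_telescope c n (B F : int -> C) : c <= n ->
  (forall k, c <= k <= n -> F k = B (k + 1) - B k) -> isum c n F = B (n + 1) - B c.
Proof.
move=> le_cn FB; rewrite /isum.
rewrite (eq_big_nat _ _ (F2 := fun i => B (c + i.+1%:Z) - B (c + i%:Z))); last first.
  move=> i /andP[_ lt_i]; rewrite FB; last by apply/andP; split; lia.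
  by rewrite (_ : c + i%:Z + 1 = c + i.+1%:Z) //; lia.
rewrite (telescope_sumr (fun i => B (c + i%:Z))) // addr0.
by rewrite (_ : c + _ = n + 1) //; lia.
Qed.

Lemma exprzDr1 (R : unitRingType) (a : R) k :
  (0 <= k) || (a \is a GRing.unit) -> a ^ (k + 1) = a ^ k * a.
Proof.
case/orP => [k_ge0 | a_unit]; last by rewrite exprzDr.
by rewrite exprzD_ss // k_ge0.
Qed.

Lemma isum_alternating_powers (x r : C) (c n : int) (w : int -> C) :
  c <= n -> (c < 0 -> r != 0) ->
  isum c n (fun k => (-1) ^ k * x ^ (n - k) * r ^ k * (r * w (k + 1) + x * w k))
    = (-1) ^ n * r ^ (n + 1) * w (n + 1) + (-1) ^ c * r ^ c * x ^ (n - c + 1) * w c.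
Proof.
move=> le_cn r_neq0.
have sign k : (-1 : C) ^ (k + 1) = - (-1) ^ k by rewrite exprzDr1 ?unitrN1 ?orbT // mulrN1.
rewrite (@isum_telescope _ _ (fun k => - ((-1) ^ k * r ^ k * x ^ (n - k + 1) * w k))) //.
  by rewrite sign (_ : n - (n + 1) + 1 = 0) //; [ring | lia].
move=> k /andP[le_ck le_kn].
rewrite sign (_ : n - (k + 1) + 1 = n - k); last by lia.
rewrite (exprzDr1 (a := x)); last by apply/orP; left; lia.
rewrite (exprzDr1 (a := r)); first by ring.
by case: (leP 0 k) => [//|k_lt0]; rewrite unitfE r_neq0 ?orbT //; lia.
Qed.

Theorem theorem2 (y z x r : C) (c n : int) :
  y != 0 -> z != 0 -> c <= n -> (c < 0 -> r != 0) ->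
  isum c n (fun k => (-1) ^ k * x ^ (n - k) * r ^ k *
      (r * lucas_v y z (k + 1) + (x * y + 2 * r * z) * lucas_u y z k))
    = (-1) ^ n * y * r ^ (n + 1) * lucas_u y z (n + 1)
      + (-1) ^ c * r ^ c * y * x ^ (n - c + 1) * lucas_u y z c
  /\
  isum c n (fun k => (-1) ^ k * x ^ (n - k) * r ^ k *
      ((y ^+ 2 - 4 * z) * r * lucas_u y z (k + 1) + (x * y + 2 * r * z) * lucas_v y z k))
    = (-1) ^ n * y * r ^ (n + 1) * lucas_v y z (n + 1)
      + (-1) ^ c * r ^ c * y * x ^ (n - c + 1) * lucas_v y z c.
Proof.
move=> _ z_neq0 le_cn r_neq0; split.
- rewrite (@eq_isum _ _ _ (fun k => (-1) ^ k * x ^ (n - k) * r ^ k *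
      (r * (y * lucas_u y z (k + 1)) + x * (y * lucas_u y z k)))); last first.
    by move=> k; rewrite lucas_vS_u //; ring.
  by rewrite isum_alternating_powers //; ring.
- rewrite (@eq_isum _ _ _ (fun k => (-1) ^ k * x ^ (n - k) * r ^ k *
      (r * (y * lucas_v y z (k + 1)) + x * (y * lucas_v y z k)))); last first.
    by move=> k; rewrite lucas_yvS //; ring.
  by rewrite isum_alternating_powers //; ring.
Qed.
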